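(* Fix $\mathbf{x}'\in\Omega$ and let $\mathbf{F}\in\mathbb{R}^{3\times2}$ have rank $2$. Then $W_{str}(\mathbf{x}',\mathbf{F})=0$ if and only if $\mathbf{F}^T\mathbf{F}=g$, where $$g=\lambda^2\,\mathbf{m}\otimes\mathbf{m}+\lambda^{-1}\,\mathbf{m}_\perp\otimes\mathbf{m}_\perp\in\mathbb{R}^{2\times2},$$ $\lambda=\big(\tfrac{s+1}{s_0+1}\big)^{1/3}$, and $\mathbf{m}_\perp\in\mathbb{S}^1$ is a unit vector perpendicular to $\mathbf{m}$.
   Context: Let $\Omega\subset\mathbb{R}^2$ be a bounded Lipschitz domain. At the point $\mathbf{x}'$ we are given scalars $s,s_0$ with $-1<s,s_0<\infty$ (values of given functions $s,s_0\in L^\infty(\Omega)$) and a unit vector $\mathbf{m}\in\mathbb{S}^1\subset\mathbb{R}^2$ (value at $\mathbf{x}'$ of the blueprinted director field). For $\mathbf{F}\in\mathbb{R}^{3\times2}$ of rank 2, let $\mathrm{I}(\mathbf{F})=\mathbf{F}^T\mathbf{F}$, $J(\mathbf{F})=\det\mathrm{I}(\mathbf{F})$, $C_{\mathbf{m}}(\mathbf{F})=\mathbf{m}\cdot\mathrm{I}(\mathbf{F})\mathbf{m}$, and define the stretching energy density $$W_{str}(\mathbf{x}',\mathbf{F})=\lambda\Big[\frac{1}{J(\mathbf{F})}+\frac{1}{s+1}\Big(\operatorname{tr}\mathrm{I}(\mathbf{F})+s_0\,C_{\mathbf{m}}(\mathbf{F})+s\,\frac{J(\mathbf{F})}{C_{\mathbf{m}}(\mathbf{F})}\Big)\Big]-3,\qquad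 \lambda=\Big(\frac{s+1}{s_0+1}\Big)^{1/3}.$$ *)

From HB Require Import structures.
From mathcomp Require Import all_boot all_order all_algebra.
From mathcomp Require Import all_classical all_reals all_analysis.
Set Implicit Arguments. Unset Strict Implicit. Unset Printing Implicit Defensive.
Import Order.TTheory GRing.Theory Num.Theory.
Local Open Scope ring_scope.

Section Defs.
Variable R : realType.

Definition Iform (F : 'M[R]_(3,2)) : 'M[R]_2 := F^T *m F.
Definition Jdet (F : 'M[R]_(3,2)) : R := \det (Iform F).
Definition Cm (m : 'cV[R]_2) (F : 'M[R]_(3,2)) : R := (m^T *m Iform F *m m) 0 0.
Definition lam (s s0 : R) : R := ((s + 1) / (s0 + 1)) `^ (3%:R^-1).
(* stretching energy density at the point x' (values s, s0, m there) *)
Definition Wstr (s s0 : R) (m : 'cV[R]_2) (F : 'M[R]_(3,2)) : R :=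
  lam s s0 * ((Jdet F)^-1 + (s + 1)^-1 *
     (\tr (Iform F) + s0 * Cm m F + s * (Jdet F / Cm m F))) - 3%:R.
Definition dot2 (u v : 'cV[R]_2) : R := (u^T *m v) 0 0.
End Defs.

From HB Require Import structures.
From mathcomp Require Import all_boot all_order all_algebra.
From mathcomp Require Import all_classical all_reals all_analysis.
From mathcomp Require Import ring lra.
Import Order.TTheory GRing.Theory Num.Theory.
Set Implicit Arguments. Unset Strict Implicit. Unset Printing Implicit Defensive.
Local Open Scope ring_scope.

(* In the orthonormal frame (m, m_perp) write I(F) = [[a, b], [b, c]], so that tr I = a + c,
   J = a c - b^2 and C_m = a, with a > 0 and J > 0 because F has rank 2. Using
   s + 1 = lambda^3 (s0 + 1) and c = (J + b^2) / a, the energy becomes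
     W = (lambda / J + a / lambda^2 + lambda J / a - 3) + b^2 / (lambda^2 (s0 + 1) a).
   The three positive terms in the bracket have product 1, so by AM-GM the bracket is
   nonnegative and vanishes iff a = lambda^2 and J = lambda; the last term vanishes iff
   b = 0.  Hence W = 0 iff a = lambda^2, b = 0 and c = 1 / lambda, which in the frame
   says I(F) = lambda^2 m m^T + lambda^-1 m_perp m_perp^T. *)

Lemma lam_gt0 (R : realType) (s s0 : R) : -1 < s -> -1 < s0 -> 0 < lam s s0.
Proof. by move=> s_gt s0_gt; apply/powR_gt0/divr_gt0; lra. Qed.

Lemma lam_cube (R : realType) (s s0 : R) : -1 < s -> -1 < s0 ->
  lam s s0 ^+ 3 * (s0 + 1) = s + 1.
Proof.
move=> s_gt s0_gt; have ratio_gt0 : 0 < (s + 1) / (s0 + 1) by apply: divr_gt0; lra.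
rewrite -(powR_mulrn _ (ltW (lam_gt0 s_gt s0_gt))) /lam -powRrM.
rewrite mulVf ?pnatr_eq0 // powRr1 ?(ltW ratio_gt0) // divfK // gt_eqF //; lra.
Qed.

Lemma leif_AGM3_prod1 (R : realFieldType) (x y z : R) : 0 <= x -> 0 <= y -> 0 <= z ->
  x * y * z = 1 -> 3 <= x + y + z ?= iff [&& x == 1, y == 1 & z == 1].
Proof.
move=> x0 y0 z0 xyz1; pose E (i : 'I_3) := [:: x; y; z]`_i.
have E_ge0 i : 0 <= E i by case: i => [[|[|[|]]]].
have := @leif_AGM _ _ 'I_3 E (in1W E_ge0).
rewrite card_ord !big_ord_recl !big_ord0 /E /= mulr1 addr0 !mulrA xyz1 addrA => AGM.
apply/leifP; case: ifPn => [/and3P[/eqP-> /eqP-> /eqP->] | not1]; first by apply/eqP; ring.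
have : 1 < ((x + y + z) / 3) ^+ 3.
  rewrite (lt_leif AGM); apply: contra not1 => /forall_inP/(_ ord0 isT)/forall_inP E0.
  have xy : x = y by apply/eqP: (E0 (lift ord0 ord0) isT).
  have xz : x = z by apply/eqP: (E0 (lift ord0 (lift ord0 ord0)) isT).
  have x1 : x == 1.
    by rewrite -(pexpr_eq1 (n := 3)) // -xyz1 -xy -xz !exprS expr0 mulr1 mulrA.
  by rewrite -xy -xz x1.
by rewrite expr_gt1 ?divr_ge0 ?addr_ge0 // ltr_pdivlMr // mul1r.
Qed.

Section StretchingEnergy.
Variable R : realFieldType.
Variables (l s s0 a b c : R).
Hypotheses (l_gt0 : 0 < l) (s0_pos : 0 < s0 + 1) (l_cube : l ^+ 3 * (s0 + 1) = s + 1).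
Hypotheses (a_gt0 : 0 < a) (J_gt0 : 0 < a * c - b ^+ 2).

Lemma stretch_energyE :
  l * ((a * c - b ^+ 2)^-1
       + (s + 1)^-1 * (a + c + s0 * a + s * ((a * c - b ^+ 2) / a))) - 3 =
  (l / (a * c - b ^+ 2) + a / l ^+ 2 + l * (a * c - b ^+ 2) / a - 3)
  + b ^+ 2 / (l ^+ 2 * (s0 + 1) * a).
Proof.
have -> : s = l ^+ 3 * (s0 + 1) - 1 by rewrite l_cube addrK.
by rewrite addrNK; field; rewrite !gt_eqF.
Qed.

Lemma stretch_energy_eq0 :
  l * ((a * c - b ^+ 2)^-1
       + (s + 1)^-1 * (a + c + s0 * a + s * ((a * c - b ^+ 2) / a))) - 3 = 0 <->
  [/\ a = l ^+ 2, b = 0 & c = l^-1].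
Proof.
rewrite stretch_energyE; set J := a * c - b ^+ 2.
have J_pos : 0 < J := J_gt0.
have [l_neq0 J_neq0] : l != 0 /\ J != 0 by rewrite !gt_eqF.
have l2_neq0 : l ^+ 2 != 0 by rewrite expf_neq0.
have D_gt0 : 0 < l ^+ 2 * (s0 + 1) * a by rewrite !mulr_gt0 ?exprn_gt0.
have prod1 : l / J * (a / l ^+ 2) * (l * J / a) = 1.
  by field; rewrite l_neq0 J_neq0 gt_eqF.
have [S_ge3 S_eq3] := leif_AGM3_prod1 (divr_ge0 (ltW l_gt0) (ltW J_pos))
  (divr_ge0 (ltW a_gt0) (exprn_ge0 2 (ltW l_gt0)))
  (divr_ge0 (mulr_ge0 (ltW l_gt0) (ltW J_pos)) (ltW a_gt0)) prod1.
split => [W0 | [a_l b0 c_l]]; last first.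
  by rewrite /J a_l b0 c_l; field; rewrite l_neq0 gt_eqF.
have beta_ge0 : 0 <= b ^+ 2 / (l ^+ 2 * (s0 + 1) * a) by rewrite divr_ge0 ?sqr_ge0 ?ltW.
have S3 : l / J + a / l ^+ 2 + l * J / a = 3 by lra.
have beta0 : b ^+ 2 / (l ^+ 2 * (s0 + 1) * a) = 0 by lra.
move: S_eq3; rewrite S3 eqxx => /esym/and3P[/eqP x1 /eqP y1 _].
have a_l : a = l ^+ 2 by rewrite -(divfK l2_neq0 a) y1 mul1r.
have J_l : J = l by apply/esym; rewrite -(divfK J_neq0 l) x1 mul1r.
have b0 : b = 0.
  by move/eqP: beta0; rewrite mulf_eq0 invr_eq0 (gt_eqF D_gt0) orbF sqrf_eq0 => /eqP.
split => //; move: J_l; rewrite /J a_l b0 expr0n subr0 => J_l.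
by rewrite -[c](mulKf l2_neq0) J_l; field.
Qed.

End StretchingEnergy.

Section QuadraticForms.
Variable R : realFieldType.

Definition bform n (A : 'M[R]_n) (u v : 'cV[R]_n) : R := (u^T *m A *m v) 0 0.

Lemma bform_sym n (A : 'M[R]_n) u v : A^T = A -> bform A u v = bform A v u.
Proof.
move=> symA; transitivity ((v^T *m A *m u)^T 0 0); last by rewrite mxE.
by rewrite !trmx_mul !trmxK symA mulmxA.
Qed.

Lemma mulmx_tr_self_gt0 n (w : 'cV[R]_n) : w != 0 -> 0 < (w^T *m w) 0 0.
Proof.
move=> w_neq0; rewrite mxE; under eq_bigr do rewrite mxE -expr2.
have sq_ge0 i : true -> 0 <= w i 0 ^+ 2 by move=> _; apply: sqr_ge0.
rewrite lt_def (sumr_ge0 _ sq_ge0) andbT.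
apply: contra w_neq0 => /eqP/(psumr_eq0P sq_ge0) w0; apply/eqP/matrixP => i j.
by rewrite (ord1 j) mxE; apply/eqP; rewrite -sqrf_eq0 w0.
Qed.

Lemma bform_gram_gt0 n k (F : 'M[R]_(n, k)) (v : 'cV[R]_k) :
  \rank F = k -> v != 0 -> 0 < bform (F^T *m F) v v.
Proof.
move=> rkF v_neq0; rewrite /bform mulmxA -trmx_mul -mulmxA mulmx_tr_self_gt0 //.
have freeFT : row_free F^T by rewrite /row_free mxrank_tr rkF.
by rewrite -trmx_eq0 trmx_mul mulmx_free_eq0 // trmx_eq0.
Qed.

Lemma bform_lincomb n (A : 'M[R]_n) x y u w :
  bform A (x *: u + y *: w) (x *: u + y *: w) =
  x ^+ 2 * bform A u u + x * y * (bform A u w + bform A w u) + y ^+ 2 * bform A w w.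
Proof.
rewrite /bform [(_ + _)^T]linearD /= ![(_ *: _)^T]linearZ /=.
rewrite !mulmxDl !mulmxDr -!scalemxAl -!scalemxAr.
set uAu := u^T *m A *m u; set uAw := u^T *m A *m w.
set wAu := w^T *m A *m u; set wAw := w^T *m A *m w.
by rewrite !mxE; ring.
Qed.

End QuadraticForms.

Lemma det_block_mx11 (R : comNzRingType) (a b c d : R) :
  \det (block_mx a%:M b%:M c%:M d%:M : 'M[R]_(1 + 1)) = a * d - b * c.
Proof.
rewrite (expand_det_row _ 0) big_ord_recl big_ord1 /cofactor !det_mx11.
rewrite !mxE !split1 unlift_none liftK /= !mxE !split1 unlift_none liftK /= !mxE.
case: unliftP => [j /(congr1 val) //| _] /=.
by rewrite !mxE eqxx !mulr1n /bump /=; ring.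
Qed.

Lemma dot2_unit_neq0 (R : realType) (u : 'cV[R]_2) : dot2 u u = 1 -> u != 0.
Proof.
move=> u_unit; apply/eqP => u0; move: u_unit.
by rewrite u0 /dot2 mulmx0 mxE => /eqP; rewrite eq_sym oner_eq0.
Qed.

Section OrthonormalFrame.
Variable R : realType.
Variables m p : 'cV[R]_2.
Hypotheses (m_unit : dot2 m m = 1) (p_unit : dot2 p p = 1) (mp_orth : dot2 m p = 0).

(* Typed as a square matrix of size 1 + 1, not 2, so that the block-matrix lemmas
   apply to [P^T *m A *m P] without casts. *)
Let P : 'M[R]_(1 + 1) := row_mx m p.

Let bform1E (u v : 'cV[R]_2) : bform 1%:M u v = dot2 u v.
Proof. by rewrite /bform mulmx1. Qed.

Let pm_orth : dot2 p m = 0.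
Proof. by rewrite -bform1E bform_sym ?trmx1 // bform1E. Qed.

Let bform_scalar (A : 'M[R]_2) u v : u^T *m A *m v = (bform A u v)%:M.
Proof. exact: mx11_scalar. Qed.

Lemma frame_orthonormal : P^T *m P = 1%:M.
Proof.
have dot2E (u v : 'cV[R]_2) : u^T *m v = (dot2 u v)%:M.
  by rewrite -(mulmx1 u^T) bform_scalar bform1E.
rewrite /P tr_row_mx mul_col_row !dot2E.
by rewrite m_unit p_unit mp_orth pm_orth raddf0 -scalar_mx_block.
Qed.

Lemma frame_complete : P *m P^T = 1%:M.
Proof. exact: mulmx1C frame_orthonormal. Qed.

Lemma frame_conj A : P^T *m A *m P =
  block_mx (bform A m m)%:M (bform A m p)%:M (bform A p m)%:M (bform A p p)%:M.
Proof. by rewrite /P tr_row_mx mul_col_mx mul_col_row !bform_scalar. Qed.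

Lemma mxtrace_frame A : \tr A = bform A m m + bform A p p.
Proof.
have -> : \tr A = \tr (P^T *m A *m P).
  by rewrite -mulmxA mxtrace_mulC -mulmxA frame_complete mulmx1.
by rewrite frame_conj mxtrace_block !mxtrace_scalar.
Qed.

Lemma det_frame A : \det A = bform A m m * bform A p p - bform A m p * bform A p m.
Proof.
have detP2 : \det P^T * \det P = 1 by rewrite -det_mulmx frame_orthonormal det1.
rewrite -det_block_mx11 -frame_conj !det_mulmx.
by rewrite mulrAC detP2 mul1r.
Qed.

Lemma frame_det_gt0 A : A^T = A -> (forall v, v != 0 -> 0 < bform A v v) ->
  0 < bform A m m * bform A p p - bform A m p ^+ 2.
Proof.
move=> symA posA; set a := bform A m m; set b := bform A m p; set c := bform A p p.
have c_gt0 : 0 < c by apply/posA/dot2_unit_neq0.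
(* The witness is chosen so that [bform A v v = c * (a * c - b ^+ 2)]. *)
pose v := c *: m + (- b) *: p.
have v_neq0 : v != 0.
  have v_norm : bform 1%:M v v = c ^+ 2 + b ^+ 2.
    by rewrite bform_lincomb !bform1E m_unit p_unit mp_orth pm_orth; ring.
  apply/eqP => v0; move: v_norm; rewrite v0 /bform mulmx0 mxE.
  by have := sqr_ge0 b; have := exprn_gt0 2 c_gt0; lra.
have := posA v v_neq0; rewrite bform_lincomb (bform_sym p m symA) -/a -/b -/c.
have -> : c ^+ 2 * a + c * - b * (b + b) + (- b) ^+ 2 * c = c * (a * c - b ^+ 2) by ring.
by rewrite pmulr_rgt0.
Qed.

Lemma frame_diagP A k1 k2 : A^T = A ->
  A = k1 *: (m *m m^T) + k2 *: (p *m p^T) <->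
  [/\ bform A m m = k1, bform A m p = 0 & bform A p p = k2].
Proof.
move=> symA.
have -> : k1 *: (m *m m^T) + k2 *: (p *m p^T) = P *m block_mx k1%:M 0%:M 0%:M k2%:M *m P^T.
  rewrite raddf0 /P mul_row_block !mulmx0 addr0 add0r tr_row_mx mul_row_col.
  by rewrite !mul_mx_scalar -!scalemxAl.
have scalar1_inj (x y : R) : x%:M = y%:M :> 'M[R]_1 -> x = y.
  by move/matrixP/(_ 0 0); rewrite !mxE.
split => [defA | [am bm cm]].
  have := frame_conj A; rewrite defA !mulmxA frame_orthonormal mul1mx.
  rewrite -mulmxA frame_orthonormal mulmx1.
  by move/esym/eq_block_mx => [/scalar1_inj-> /scalar1_inj-> _ /scalar1_inj->].
rewrite -am -bm -cm -{2}(bform_sym p m symA) -frame_conj.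
by rewrite !mulmxA frame_complete mul1mx -mulmxA frame_complete mulmx1.
Qed.

End OrthonormalFrame.

Theorem proposition2p3 (R : realType) (s s0 : R) (m mperp : 'cV[R]_2)
  (F : 'M[R]_(3,2)) :
  -1 < s -> -1 < s0 ->
  dot2 m m = 1 -> dot2 mperp mperp = 1 -> dot2 m mperp = 0 ->
  \rank F = 2%N ->
  (Wstr s s0 m F = 0 <->
   Iform F = (lam s s0) ^+ 2 *: (m *m m^T) + (lam s s0)^-1 *: (mperp *m mperp^T)).
Proof.
move=> s_gt s0_gt m_unit p_unit mp_orth rkF.
set I := Iform F; have s0_pos : 0 < s0 + 1 by lra.
have I_sym : I^T = I by rewrite /I /Iform trmx_mul trmxK.
have I_posdef v : v != 0 -> 0 < bform I v v := bform_gram_gt0 rkF.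
have a_gt0 := I_posdef m (dot2_unit_neq0 m_unit).
have J_gt0 := frame_det_gt0 m_unit p_unit mp_orth I_sym I_posdef.
have JE : Jdet F = bform I m m * bform I mperp mperp - bform I m mperp ^+ 2.
  by rewrite /Jdet (det_frame m_unit p_unit mp_orth) (bform_sym mperp m I_sym) expr2.
rewrite (frame_diagP m_unit p_unit mp_orth _ _ I_sym).
rewrite -(stretch_energy_eq0 (lam_gt0 s_gt s0_gt) s0_pos (lam_cube s_gt s0_gt) a_gt0 J_gt0).
by rewrite /Wstr JE (mxtrace_frame m_unit p_unit mp_orth).
Qed.
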